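(* Let $x_1^*,\dots,x_n^*$ satisfy $0\le x_i^*\le q_i$ for each $i$ and $x_1^*\le x_2^*\le\cdots\le x_n^*$. Then there exists a function $f$ such that $(f,x_1^*,\dots,x_n^* )$ is a feasible solution of the reward-design problem if and only if \[C\left(\frac{x_n^*}{q_n}+\sum_{i=1}^{n-1}\left((n-i)\left(\frac{1}{q_i}-\frac{1}{q_{i+1}}\right)+\frac{1}{q_i}\right)x_i^*\right)\le B.\] Moreover, if this inequality holds, then $(f,x_1^*,\dots,x_n^* )$ is feasible for the step function $f$ defined by $f(x)=0$ for $0\le x<x_1^*$, and for $x_j^*\le x<x_{j+1}^*$ ($1\le j\le n$, with $x_{n+1}^*=+\infty$) \[f(x)=C\left(\sum_{t=1}^{j-1}\left(\frac{x_t^*}{q_t}-\frac{x_t^*}{q_{t+1}}\right)+\frac{x_j^*}{q_j}\right).\]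
   Context: There are $n$ agents with types $0<q_1\le q_2\le\cdots\le q_n$, a cost constant $C>0$ and a budget $B>0$. A reward function is a map $f:[0,\infty)\to[0,\infty)$; agent $i$'s utility for producing quality $x$ is $u_i(x)=f(x)-xC/q_i$. A tuple $(f,x_1^*,\dots,x_n^* )$ is a feasible solution of the reward-design problem if for each $i$: $0\le x_i^*\le q_i$ and $u_i(x_i^* )\ge u_i(x)$ for all $x\in[0,q_i]$, and moreover $\sum_{i=1}^n f(x_i^* )\le B$. *)

From mathcomp Require Import all_boot all_order all_algebra.
From mathcomp Require Import reals.
Set Implicit Arguments. Unset Strict Implicit. Unset Printing Implicit Defensive.
Import Order.TTheory GRing.Theory Num.Theory.
Local Open Scope ring_scope.

(* A reward function maps [0,oo) to [0,oo); we model it as f : R -> R that is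
   nonnegative on [0,oo) (values at negative arguments are irrelevant). *)
Definition reward_fun (R : realType) (f : R -> R) : Prop :=
  forall x, 0 <= x -> 0 <= f x.

Definition utility (R : realType) (f : R -> R) (C qi x : R) : R :=
  f x - x * C / qi.

Definition feasible (R : realType) (n : nat) (q : nat -> R) (C B : R)
  (f : R -> R) (xs : nat -> R) : Prop :=
  reward_fun f /\
  (forall i : nat, (1 <= i <= n)%N ->
     0 <= xs i <= q i /\
     (forall x : R, 0 <= x <= q i -> utility f C (q i) x <= utility f C (q i) (xs i))) /\
  \sum_(1 <= i < n.+1) f (xs i) <= B.

Definition step_reward (R : realType) (n : nat) (q : nat -> R) (C : R)
  (xs : nat -> R) (x : R) : R :=
  if x < xs 1%N then 0
  else
    let j := (\max_(1 <= j < n.+1 | (xs j <= x)%R) j)%N in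
    C * (\sum_(1 <= t < j) (xs t / q t - xs t / q t.+1) + xs j / q j).

Definition budget_cond (R : realType) (n : nat) (q : nat -> R) (C B : R)
  (xs : nat -> R) : Prop :=
  C * (xs n / q n +
       \sum_(1 <= i < n) (((n - i)%:R * (1 / q i - 1 / q i.+1) + 1 / q i) * xs i))
  <= B.

From mathcomp Require Import all_boot all_order all_algebra.
From mathcomp Require Import reals.
From mathcomp Require Import ring lra zify.
Import Order.TTheory GRing.Theory Num.Theory.
Local Open Scope ring_scope.

(* Let F j be the value of the step reward on [x_j, x_(j+1)); consecutive
   levels differ by C (x_(j+1) - x_j) / q_(j+1), and sum_j F j is exactly the
   left-hand side of the budget condition.
   Necessity: in a feasible solution agent j+1 must not prefer x_j and agent 1
   must not prefer 0, so by induction f (x_j) >= F j; summing gives the budget.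
   Sufficiency: for agent i the utility U k = F k - x_k C / q_i of choosing x_k
   has increments C (x_(k+1) - x_k) (1/q_(k+1) - 1/q_i), which are nonnegative
   for k < i and nonpositive for k >= i since q is nondecreasing.  Hence x_i is
   optimal among the x_k, and any other x is dominated by the largest x_k
   below it, or by 0 <= U 1 when x < x_1. *)

Lemma nondecn_itv {d : Order.disp_t} {T : preorderType d} {f : nat -> T} {a b : nat} :
  (forall i, (a <= i < b)%N -> (f i <= f i.+1)%O) ->
  forall i j, (a <= i <= j)%N -> (j <= b)%N -> (f i <= f j)%O.
Proof.
move=> f_step i j /andP[ai ij] jb.
apply: (@homo_leq_in _ [pred k | a <= k <= b]%N f <=%O) => //; rewrite ?inE.
- by move=> y x z; apply: le_trans.
- by move=> u v /andP[au _] /andP[_ vb] w /andP[uw wv]; rewrite inE; lia.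
- by move=> k /andP[ak _]; rewrite inE => /andP[_ kb]; apply: f_step; lia.
- lia.
- lia.
Qed.

Lemma bigmax_nat_cond_witness (P : pred nat) (a b k : nat) :
  (a <= k < b)%N -> P k ->
  let m := (\max_(a <= j < b | P j) j)%N in (k <= m < b)%N /\ P m.
Proof.
move=> kab Pk m.
have km : (k <= m)%N by apply: leq_bigmax_seq; rewrite ?mem_index_iota.
have : (m == 0%N) || ((a <= m < b)%N && P m).
  rewrite /m big_seq_cond.
  apply: (big_ind (fun m => (m == 0%N) || ((a <= m < b)%N && P m))).
  - by [].
  - move=> x y Qx Qy.
    by case/orP: (leq_total x y) => h; [rewrite (maxn_idPr h) | rewrite (maxn_idPl h)].
  - by move=> i /andP[+ ->]; rewrite mem_index_iota => ->; rewrite orbT.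
case/orP=> [/eqP m0|/andP[/andP[_ mb] Pm]]; last by rewrite km mb.
have k0 : k = 0%N by apply/eqP; rewrite -leqn0 -m0.
by case/andP: kab => _ kb; rewrite m0 -k0 leqnn kb.
Qed.

Definition step_level {R : realType} (q : nat -> R) (C : R) (xs : nat -> R) (j : nat) : R :=
  C * (\sum_(1 <= t < j) (xs t / q t - xs t / q t.+1) + xs j / q j).

Section StepLevel.
Context {R : realType} {q xs : nat -> R} {C : R}.
Local Notation F := (step_level q C xs).

Lemma step_levelS j : (0 < j)%N -> F j.+1 = F j + C * (xs j.+1 - xs j) / q j.+1.
Proof. by move=> j_gt0; rewrite /step_level big_nat_recr //=; ring. Qed.

Lemma sum_step_level m : (0 < m)%N ->
  \sum_(1 <= i < m.+1) F i =
  C * (xs m / q m +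
       \sum_(1 <= i < m) (((m - i)%:R * (1 / q i - 1 / q i.+1) + 1 / q i) * xs i)).
Proof.
elim: m => [//|m IH] _.
have [->|m_gt0] := posnP m.
  by rewrite big_nat1 big_geq // /step_level big_geq //; ring.
rewrite big_nat_recr //= IH // (big_nat_recr m) //= subSnn.
have -> : \sum_(1 <= i < m) (((m.+1 - i)%:R * (1 / q i - 1 / q i.+1) + 1 / q i) * xs i)
  = \sum_(1 <= i < m) (((m - i)%:R * (1 / q i - 1 / q i.+1) + 1 / q i) * xs i)
    + \sum_(1 <= i < m) (xs i / q i - xs i / q i.+1).
  rewrite -big_split /=; apply: eq_big_nat => i /andP[_ lt_im].
  by rewrite subSn ?(ltnW lt_im) // mulrSr; ring.
rewrite /step_level big_nat_recr //=; ring.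
Qed.

End StepLevel.

Section StepReward.
Context {R : realType} {n : nat} {q xs : nat -> R} {C : R}.
Hypotheses (hx : forall i : nat, (1 <= i <= n)%N -> 0 <= xs i <= q i)
  (hxs : forall i : nat, (1 <= i < n)%N -> xs i <= xs i.+1).
Local Notation F := (step_level q C xs).
Local Notation f := (step_reward n q C xs).

Lemma feasible_step_level_le {g : R -> R} {B : R} : feasible n q C B g xs ->
  forall i, (1 <= i <= n)%N -> F i <= g (xs i).
Proof.
case=> g_ge0 [g_incentive _]; elim=> [//|i IH] hi.
case: (posnP i) hi => [-> | i_gt0] hi.
  have [/andP[x1_ge0 x1_le_q] ic1] := g_incentive 1%N hi.
  have := ic1 0 ltac:(by rewrite lexx (le_trans x1_ge0 x1_le_q)).
  have := g_ge0 0 (lexx 0).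
  have -> : F 1%N = xs 1%N * C / q 1%N by rewrite /step_level big_geq //; ring.
  by rewrite /utility !mul0r subr0; lra.
have [/andP[_ le_xS_q] icS] := g_incentive i.+1 hi.
have [xs_ge0 _] := andP (hx i ltac:(lia)).
have le_xs : xs i <= xs i.+1 by apply: hxs; lia.
have := icS (xs i) ltac:(rewrite xs_ge0 (le_trans le_xs le_xS_q)); have := IH ltac:(lia).
have -> : F i.+1 = F i + xs i.+1 * C / q i.+1 - xs i * C / q i.+1.
  by rewrite step_levelS //; ring.
by rewrite /utility; lra.
Qed.

Hypotheses (hn : (1 <= n)%N) (hq1 : 0 < q 1%N)
  (hq : forall i : nat, (1 <= i < n)%N -> q i <= q i.+1) (hC : 0 < C).

Lemma q_gt0 k : (1 <= k <= n)%N -> 0 < q k.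
Proof. by move=> hk; apply: (lt_le_trans hq1); apply: (nondecn_itv hq); lia. Qed.

Lemma invq_le k l : (1 <= k <= l)%N -> (l <= n)%N -> (q l)^-1 <= (q k)^-1.
Proof.
by move=> hkl hl; rewrite lef_pV2 ?posrE ?q_gt0; [exact: (nondecn_itv hq) | lia..].
Qed.

Lemma step_level_ge0 j : (1 <= j <= n)%N -> 0 <= F j.
Proof.
move=> hj; have F1_ge0 : 0 <= F 1%N.
  rewrite /step_level big_geq // add0r; apply: mulr_ge0; first exact: ltW.
  by apply: divr_ge0; [case/andP: (hx 1%N ltac:(lia)) | exact: ltW].
apply: (le_trans F1_ge0); apply: (nondecn_itv (a := 1%N) (b := n)); [|lia..].
move=> k hk; rewrite step_levelS 1?lerDl; last lia.
apply: divr_ge0; last by apply: ltW; apply: q_gt0; lia.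
by apply: mulr_ge0; [exact: ltW | rewrite subr_ge0; apply: hxs].
Qed.

Lemma step_level_incentive i j : (1 <= i <= n)%N -> (1 <= j <= n)%N ->
  F j - xs j * C / q i <= F i - xs i * C / q i.
Proof.
move=> hi hj; pose U k := F k - xs k * C / q i.
have U_step k : (1 <= k)%N ->
    U k.+1 - U k = C * (xs k.+1 - xs k) * ((q k.+1)^-1 - (q i)^-1).
  by move=> hk; rewrite /U step_levelS //; ring.
have gap_ge0 k : (1 <= k < n)%N -> 0 <= C * (xs k.+1 - xs k).
  by move=> hk; apply: mulr_ge0; [exact: ltW | rewrite subr_ge0; apply: hxs].
case: (leqP j i) => [le_ji | /ltnW le_ij].
- apply: (nondecn_itv (f := U) (a := 1%N) (b := i)); [|lia..].
  move=> k hk; rewrite -subr_ge0 U_step; last lia.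
  by apply: mulr_ge0; [apply: gap_ge0 | rewrite subr_ge0; apply: invq_le]; lia.
- rewrite -lerN2; apply: (nondecn_itv (f := fun k => - U k) (a := i) (b := n)); [|lia..].
  move=> k hk; rewrite lerN2 -subr_le0 U_step; last lia.
  by apply: mulr_ge0_le0; [apply: gap_ge0 | rewrite subr_le0; apply: invq_le]; lia.
Qed.

Lemma step_reward_at i : (1 <= i <= n)%N -> f (xs i) = F i.
Proof.
move=> hi; have xs_le k l : (1 <= k <= l)%N -> (l <= n)%N -> xs k <= xs l.
  by move=> hkl hl; apply: (nondecn_itv hxs).
rewrite /step_reward ltNge xs_le /=; [|lia..].
have [/andP[le_iM lt_Mn] le_xsM] :=
  @bigmax_nat_cond_witness (fun j => xs j <= xs i) 1 n.+1 i ltac:(lia) (lexx _).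
set M := (\max_(1 <= j < n.+1 | (xs j <= xs i)%R) j)%N in le_iM lt_Mn le_xsM *.
apply/eqP; rewrite -subr_eq0 -(@telescope_sumr _ i M F) //.
rewrite big_nat_cond big1 // => k /andP[hk _].
have flat : xs k.+1 = xs k.
  have le_kS : xs k <= xs k.+1 by apply: hxs; lia.
  have le_SM : xs k.+1 <= xs M by apply: xs_le; lia.
  have le_ik : xs i <= xs k by apply: xs_le; lia.
  by apply: le_anti; rewrite le_kS (le_trans le_SM (le_trans le_xsM le_ik)).
by rewrite step_levelS ?flat; [rewrite subrr mulr0 mul0r addr0 subrr | lia].
Qed.

Lemma step_reward_ge_xs1 x : xs 1%N <= x ->
  exists2 j, (1 <= j <= n)%N & xs j <= x /\ f x = F j.
Proof.
move=> le_x1x; rewrite /step_reward ltNge le_x1x /=.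
have [/andP[le_1M lt_Mn] le_xsM] :=
  @bigmax_nat_cond_witness (fun j => xs j <= x) 1 n.+1 1 ltac:(lia) le_x1x.
by exists (\max_(1 <= j < n.+1 | (xs j <= x)%R) j)%N; [rewrite le_1M -ltnS | ].
Qed.

Lemma step_reward_incentive i x : (1 <= i <= n)%N -> 0 <= x ->
  utility f C (q i) x <= utility f C (q i) (xs i).
Proof.
move=> hi x_ge0; rewrite /utility step_reward_at //.
have xCq_ge0 : 0 <= x * C / q i by rewrite divr_ge0 ?mulr_ge0 // ltW // q_gt0.
have [lt_x_x1 | /step_reward_ge_xs1 [j hj [le_xj_x ->]]] := ltP x (xs 1%N).
- have U1_ge0 : 0 <= F 1%N - xs 1%N * C / q i.
    have -> : F 1%N - xs 1%N * C / q i = C * xs 1%N * ((q 1%N)^-1 - (q i)^-1).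
      by rewrite /step_level big_geq //; ring.
    have [x1_ge0 _] := andP (hx 1%N ltac:(lia)).
    by rewrite mulr_ge0 ?mulr_ge0 ?(ltW hC) // subr_ge0; apply: invq_le; lia.
  have U1_le : F 1%N - xs 1%N * C / q i <= F i - xs i * C / q i.
    by apply: step_level_incentive; lia.
  by rewrite /step_reward lt_x_x1; lra.
- have := step_level_incentive _ _ hi hj.
  have : xs j * C / q i <= x * C / q i.
    by rewrite ler_wpM2r ?invr_ge0 ?ler_wpM2r ?(ltW hC) // ltW // q_gt0.
  lra.
Qed.

Lemma step_reward_feasible B : budget_cond n q C B xs -> feasible n q C B f xs.
Proof.
move=> budget; split; [|split].
- move=> x _.
  have [lt_x_x1 | /step_reward_ge_xs1 [j hj [_ ->]]] := ltP x (xs 1%N).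
    by rewrite /step_reward lt_x_x1.
  exact: step_level_ge0.
- move=> i hi; split; first exact: hx.
  by move=> x /andP[x_ge0 _]; apply: step_reward_incentive.
- under eq_big_nat => i /andP[i_ge1 i_lt_n1] do rewrite step_reward_at ?i_ge1 //.
  by rewrite sum_step_level.
Qed.

End StepReward.

Theorem lemma2 (R : realType) (n : nat) (q : nat -> R) (C B : R) (xs : nat -> R)
  (hn : (1 <= n)%N)
  (hq1 : 0 < q 1%N)
  (hq : forall i : nat, (1 <= i < n)%N -> q i <= q i.+1)
  (hC : 0 < C) (hB : 0 < B)
  (hx : forall i : nat, (1 <= i <= n)%N -> 0 <= xs i <= q i)
  (hxs : forall i : nat, (1 <= i < n)%N -> xs i <= xs i.+1) :
  ((exists f : R -> R, feasible n q C B f xs) <-> budget_cond n q C B xs) /\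
  (budget_cond n q C B xs -> feasible n q C B (step_reward n q C xs) xs).
Proof.
have sufficient : budget_cond n q C B xs -> feasible n q C B (step_reward n q C xs) xs.
  exact: step_reward_feasible.
split=> //; split=> [[f f_feasible] | /sufficient]; last by exists (step_reward n q C xs).
rewrite /budget_cond -sum_step_level //; apply: le_trans f_feasible.2.2.
apply: ler_sum_nat => i /andP[i_ge1 i_le_n].
by apply: (feasible_step_level_le hx hxs f_feasible); rewrite i_ge1.
Qed.
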